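(* Let $k\ge1$ and $S_a,S_b\in\{0,1\}^{k^2}$. Let $G$ be the directed unweighted graph on vertices $\ell_i,\ell_i',r_i,r_i'$ ($1\le i\le k$) with edges $(\ell_i,r_i)$ and $(r_i',\ell_i')$ for each $i$, the edge $(\ell_j',\ell_i)$ whenever $S_a[(i-1)k+j]=1$, and the edge $(r_i,r_j')$ whenever $S_b[(i-1)k+j]=1$. If there is an index $m$ with $S_a[m]=S_b[m]=1$, then $G$ contains a directed cycle of length $4$; otherwise every directed cycle of $G$ has length at least $8$.
   Context: For a bit string $S$, $S[m]$ denotes its $m$-th bit. *)

From HB Require Import structures.
From mathcomp Require Import all_boot.
Set Implicit Arguments. Unset Strict Implicit. Unset Printing Implicit Defensive.

(* The four kinds of vertices: l_i, l'_i, r_i, r'_i. *)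
Inductive side := Lv | Lp | Rv | Rp.

Definition side_eqb (a b : side) : bool :=
  match a, b with
  | Lv, Lv | Lp, Lp | Rv, Rv | Rp, Rp => true
  | _, _ => false
  end.

Lemma side_eqP : Equality.axiom side_eqb.
Proof. by case; case; constructor. Qed.

HB.instance Definition _ := hasDecEq.Build side side_eqP.

(* Vertex (s, i) with i : 'I_k (0-based, i.e. paper's index i+1). *)
Definition vertex (k : nat) := (side * 'I_k)%type.

(* Bit strings S in {0,1}^(k^2) are seq bool of size k^2;
   the paper's S[m] (1-based) is  nth false S (m-1).
   Paper's index (i-1)k + j (1-based i,j) becomes i*k + j (0-based). *)
Definition G_edge (k : nat) (Sa Sb : seq bool) : rel (vertex k) :=
  fun u v =>
    match u.1, v.1 with
    | Lv, Rv => u.2 == v.2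
    | Rp, Lp => u.2 == v.2
    | Lp, Lv => nth false Sa (nat_of_ord v.2 * k + u.2) (* (l'_j, l_i) if Sa[(i-1)k+j] *)
    | Rv, Rp => nth false Sb (nat_of_ord u.2 * k + v.2) (* (r_i, r'_j) if Sb[(i-1)k+j] *)
    | _, _ => false
    end.

Definition dcycle (T : eqType) (e : rel T) (c : seq T) : bool :=
  [&& c != [::], uniq c & cycle e c].
Arguments G_edge : clear implicits.

(* Every edge of G moves around the four sides in the order l -> r -> r' -> l' -> l,
   so the length of any directed cycle is a multiple of 4.  A cycle of length
   exactly 4 is l_i -> r_i -> r'_j -> l'_j -> l_i, and it exists iff
   S_a[(i-1)k+j] = S_b[(i-1)k+j] = 1. *)

From mathcomp Require Import all_boot.
From mathcomp Require Import zify.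

Set Implicit Arguments.
Unset Strict Implicit.
Unset Printing Implicit Defensive.

Definition phase (s : side) : nat :=
  match s with Lv => 0 | Rv => 1 | Rp => 2 | Lp => 3 end.

Lemma phase_lt4 (s : side) : phase s < 4.
Proof. by case: s. Qed.

Section Graph.

Variables (k : nat) (Sa Sb : seq bool).

Local Notation e := (G_edge k Sa Sb).

Definition common_bit := exists m, m < k ^ 2 /\ nth false Sa m /\ nth false Sb m.

Lemma G_edge_phase (u v : vertex k) : e u v -> phase v.1 = (phase u.1 + 1) %% 4.
Proof. by case: u => [[] ?]; case: v => [[] ?]. Qed.

Lemma path_phase (x : vertex k) s :
  path e x s -> phase (last x s).1 = (phase x.1 + size s) %% 4.
Proof.
elim: s x => [|y s IH] x /=.
  by move=> _; rewrite addn0 modn_small // phase_lt4.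
case/andP=> /G_edge_phase exy /IH ->; rewrite exy.
by have := phase_lt4 x.1; lia.
Qed.

Lemma dvdn4_size_cycle (c : seq (vertex k)) : cycle e c -> 4 %| size c.
Proof.
case: c => [|x s] //= /path_phase.
rewrite last_rcons size_rcons; have := phase_lt4 x.1; lia.
Qed.

Lemma common_bit_ord (i j : 'I_k) :
  nth false Sa (i * k + j) -> nth false Sb (i * k + j) -> common_bit.
Proof.
move=> ha hb; exists (i * k + j); split=> //.
by have := ltn_ord i; have := ltn_ord j; nia.
Qed.

Lemma common_bit_4cycle : common_bit ->
  exists c : seq (vertex k), dcycle e c /\ size c = 4.
Proof.
case=> m [mlt [ha hb]].
have k_gt0 : 0 < k by case: k mlt.
have ilt : m %/ k < k by rewrite ltn_divLR //; nia.
have jlt : m %% k < k by rewrite ltn_mod.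
pose i := Ordinal ilt; pose j := Ordinal jlt.
have em : m = i * k + j by rewrite /= -divn_eq.
exists [:: (Lv, i); (Rv, i); (Rp, j); (Lp, j)]; split=> //.
by rewrite /dcycle /= /G_edge /= !eqxx -em ha hb.
Qed.

Lemma cycle4_common_bit (a b c d : vertex k) :
  cycle e [:: a; b; c; d] -> common_bit.
Proof.
case: a b c d => [sa ia] [sb ib] [sc ic] [sd id].
rewrite /= /G_edge /= andbT.
case: sa; case: sb => //; case: sc => //; case: sd => //=;
  rewrite ?andbF // => /and4P[].
- by move=> /eqP<- hb /eqP<- ha; apply: common_bit_ord ha hb.
- by move=> ha /eqP<- hb /eqP d_eq_a; subst id; apply: common_bit_ord ha hb.
- by move=> hb /eqP<- ha /eqP d_eq_a; subst id; apply: common_bit_ord ha hb.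
- by move=> /eqP<- ha /eqP<- hb; apply: common_bit_ord ha hb.
Qed.

End Graph.

Theorem mainTheorem6 (k : nat) (Sa Sb : seq bool) :
  1 <= k -> size Sa = k ^ 2 -> size Sb = k ^ 2 ->
  ((exists m, m < k ^ 2 /\ nth false Sa m /\ nth false Sb m) ->
     exists c : seq (vertex k), dcycle (G_edge k Sa Sb) c /\ size c = 4)
  /\
  (~ (exists m, m < k ^ 2 /\ nth false Sa m /\ nth false Sb m) ->
     forall c : seq (vertex k), dcycle (G_edge k Sa Sb) c -> 8 <= size c).
Proof.
move=> _ _ _; split; first exact: common_bit_4cycle.
move=> no_common c /and3P[c_nil _ c_cycle].
have size_gt0 : 0 < size c by rewrite lt0n size_eq0.
have size_neq4 : size c != 4.
  apply: contra_notN no_common => /eqP.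
  by case: c {c_nil size_gt0} c_cycle => [|a [|b [|c [|d []]]]] // /cycle4_common_bit.
by move: (dvdn4_size_cycle c_cycle) size_gt0 size_neq4; lia.
Qed.
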